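(* Under Assumption 1, let $(x^k)_{k\in\mathbb{N}}$ be generated by PPGA. Then $(x^k)$ is bounded and every accumulation point of $(x^k)$ is a stationary point of $F$.
   Context: Let $f:\mathbb{R}^n\to(-\infty,+\infty]$ be proper lsc, $g,h:\mathbb{R}^n\to\mathbb{R}$, $\Omega:=\{x:g(x)\ne0\}$, $F(x):=\frac{f(x)+h(x)}{g(x)}$ on $\Omega\cap\mathrm{dom}(f)$ and $+\infty$ otherwise. Assumption 1: (i) $f$ locally Lipschitz on $\mathrm{dom}(f)\cap\Omega$; (ii) $g$ locally Lipschitz continuously differentiable and positive on $\Omega\cap\mathrm{dom}(f)$; (iii) $\nabla h$ is $L$-Lipschitz, $L>0$; (iv) $f+h\ge0$ on $\mathrm{dom}(f)$, $\Omega\cap\mathrm{dom}(f)\ne\emptyset$; (v) $\mathrm{prox}_{f-\gamma g}(x)\ne\emptyset$ for all $x$, $\gamma\ge0$; (vi) $F$ lsc and level bounded. $\mathrm{prox}_\varphi(x):=\arg\min_u\{\varphi(u)+\frac12\|u-x\|_2^2\}$. Fréchet subdifferential: $\hat\partial\varphi(x):=\{v:\liminf_{z\to x,z\ne x}\frac{\varphi(z)-\varphi(x)-\langle v,z-x\rangle}{\|z-x\|_2}\ge0\}$; a stationary point of $F$ is $x^\star$ with $0\in\hat\partial F(x^\star)$. PPGA: choose $x^0\in\Omega\cap\mathrm{dom}(f)$ and $0<\underline\alpha\le\alpha_k\le\overline\alpha<1/L$; for $k=0,1,\dots$ set $C_k:=F(x^k)$ and pick any $x^{k+1}\in\mathrm{prox}_{\alpha_k(f-C_kg)}(x^k-\alpha_k\nabla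 h(x^k))$. *)

From HB Require Import structures.
From mathcomp Require Import all_boot all_order all_algebra.
From mathcomp Require Import all_classical all_reals ereal.
Set Implicit Arguments. Unset Strict Implicit. Unset Printing Implicit Defensive.
Import Order.TTheory GRing.Theory Num.Theory.
Local Open Scope ring_scope.
Local Open Scope ereal_scope.

Section Defs.
Variables (R : realType) (n : nat).
Notation V := 'rV[R]_n.

Definition dot (x y : V) : R := (\sum_(i < n) x 0 i * y 0 i)%R.
Definition norm2 (x : V) : R := Num.sqrt (dot x x).

Definition dom (f : V -> \bar R) : set V := [set x | f x != +oo].

Definition proper_fun (f : V -> \bar R) : Prop :=
  (forall x, f x != -oo) /\ (exists x, f x != +oo).

Definition lsc (f : V -> \bar R) : Prop :=
  forall x (a : R), a%:E < f x ->
    exists delta : R, (0 < delta)%R /\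
      forall z, (norm2 (z - x) < delta)%R -> a%:E < f z.

Definition level_bounded (f : V -> \bar R) : Prop :=
  forall a : R, exists M : R, forall x, f x <= a%:E -> (norm2 x <= M)%R.

Definition loc_lipschitz_on (S : set V) (u : V -> R) : Prop :=
  forall x, S x -> exists delta K : R, (0 < delta)%R /\
    forall y z, S y -> S z -> (norm2 (y - x) < delta)%R -> (norm2 (z - x) < delta)%R ->
      (`|u y - u z| <= K * norm2 (y - z))%R.

Definition loc_lipschitz_on_vec (S : set V) (u : V -> V) : Prop :=
  forall x, S x -> exists delta K : R, (0 < delta)%R /\
    forall y z, S y -> S z -> (norm2 (y - x) < delta)%R -> (norm2 (z - x) < delta)%R ->
      (norm2 (u y - u z) <= K * norm2 (y - z))%R.

Definition is_gradient (u : V -> R) (x gv : V) : Prop :=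
  forall eps : R, (0 < eps)%R -> exists delta : R, (0 < delta)%R /\
    forall z, (norm2 (z - x) < delta)%R ->
      (`|u z - u x - dot gv (z - x)| <= eps * norm2 (z - x))%R.

Definition lipschitz_vec (L : R) (u : V -> V) : Prop :=
  forall x y, (norm2 (u x - u y) <= L * norm2 (x - y))%R.

Definition Omega (g : V -> R) : set V := [set x | g x != 0%R].

Definition Ffrac (f : V -> \bar R) (g h : V -> R) (x : V) : \bar R :=
  if (g x != 0%R) && (f x != +oo)
  then (((fine (f x) + h x) / g x)%R)%:E else +oo.

Definition in_prox (phi : V -> \bar R) (x u : V) : Prop :=
  forall w, phi u + ((norm2 (u - x)) ^+ 2 / 2)%:E
            <= phi w + ((norm2 (w - x)) ^+ 2 / 2)%:E.

(* Frechet subdifferential: v \in \hat\partial phi(x)  (requires phi x finite);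
   liminf_{z->x, z<>x} (phi z - phi x - <v,z-x>)/||z-x|| >= 0, unfolded. *)
Definition frechet_subgrad (phi : V -> \bar R) (x v : V) : Prop :=
  phi x \is a fin_num /\
  forall eps : R, (0 < eps)%R -> exists delta : R, (0 < delta)%R /\
    forall z, z != x -> (norm2 (z - x) < delta)%R ->
      phi x + (dot v (z - x) - eps * norm2 (z - x))%:E <= phi z.

Definition stationary (phi : V -> \bar R) (x : V) : Prop := frechet_subgrad phi x 0.

Definition accumulation_point (xs : nat -> V) (xbar : V) : Prop :=
  exists phi : nat -> nat, (forall j, (phi j < phi j.+1)%N) /\
    forall eps : R, (0 < eps)%R -> exists N, forall j, (N <= j)%N ->
      (norm2 (xs (phi j) - xbar) < eps)%R.

Definition bounded_seq (xs : nat -> V) : Prop :=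
  exists M : R, forall k, (norm2 (xs k) <= M)%R.

End Defs.

From HB Require Import structures.
From mathcomp Require Import all_boot all_order all_algebra.
From mathcomp Require Import all_classical all_reals ereal all_analysis.
From mathcomp Require Import ring lra.
Import Order.TTheory GRing.Theory Num.Theory.
Import numFieldNormedType.Exports.
Set Implicit Arguments. Unset Strict Implicit. Unset Printing Implicit Defensive.
Local Open Scope ring_scope.
Local Open Scope classical_set_scope.

(* Write C_k := F(x^k).  Testing the prox step against w := x^k and using the descent
   lemma for h gives the sufficient decrease
     c ||x^{k+1} - x^k||^2 <= g(x^{k+1}) (C_k - C_{k+1}),   c := 1/(2 aup) - L/2 > 0,
   so (C_k) decreases and the iterates stay in the sublevel set {F <= C_0}, which is
   bounded and, F being lsc, compact.  There g is continuous, hence bounded, so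
   ||x^{k+1} - x^k|| -> 0 because (C_k) converges.  If x^{k_j} -> xbar, passing to the
   limit in the prox inequality against an arbitrary w gives
     f(w) - F(xbar) g(w) + <grad h(xbar), w - xbar> + ||w - xbar||^2 / (2 alow) >= -h(xbar),
   and with w := z near xbar, together with the first-order expansion of h at xbar and
   g(z) >= g(xbar)/2, this yields F(z) >= F(xbar) - eps ||z - xbar||, i.e. 0 is a
   Frechet subgradient of F at xbar. *)

Section Euclidean.
Variables (R : realType) (n : nat).
Implicit Types (x y z : 'rV[R]_n) (a : R).

Lemma dotC x y : dot x y = dot y x.
Proof. by apply: eq_bigr => i _; rewrite mulrC. Qed.

Lemma dotDl x y z : dot (x + y) z = dot x z + dot y z.
Proof. by rewrite /dot -big_split; apply: eq_bigr => i _; rewrite mxE mulrDl. Qed.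

Lemma dotDr x y z : dot z (x + y) = dot z x + dot z y.
Proof. by rewrite dotC dotDl !(dotC z). Qed.

Lemma dotZl a x y : dot (a *: x) y = a * dot x y.
Proof. by rewrite /dot mulr_sumr; apply: eq_bigr => i _; rewrite mxE mulrA. Qed.

Lemma dotZr a x y : dot y (a *: x) = a * dot y x.
Proof. by rewrite dotC dotZl dotC. Qed.

Lemma dotNl x y : dot (- x) y = - dot x y.
Proof. by rewrite -scaleN1r dotZl mulN1r. Qed.

Lemma dotNr x y : dot y (- x) = - dot y x.
Proof. by rewrite dotC dotNl dotC. Qed.

Lemma dotBl x y z : dot (x - y) z = dot x z - dot y z.
Proof. by rewrite dotDl dotNl. Qed.

Lemma dotBr x y z : dot z (x - y) = dot z x - dot z y.
Proof. by rewrite dotDr dotNr. Qed.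

Lemma dot0l x : dot 0 x = 0.
Proof. by rewrite /dot big1 // => i _; rewrite mxE mul0r. Qed.

Lemma dotxx_ge0 x : 0 <= dot x x.
Proof. by rewrite /dot sumr_ge0 // => i _; rewrite -expr2 sqr_ge0. Qed.

Lemma norm2_ge0 x : 0 <= norm2 x.
Proof. exact: sqrtr_ge0. Qed.

Lemma sqr_norm2 x : norm2 x ^+ 2 = dot x x.
Proof. by rewrite sqr_sqrtr // dotxx_ge0. Qed.

Lemma norm2N x : norm2 (- x) = norm2 x.
Proof. by rewrite /norm2 dotNl dotNr opprK. Qed.

Lemma norm2_subC x y : norm2 (x - y) = norm2 (y - x).
Proof. by rewrite -norm2N opprB. Qed.

Lemma norm2Z a x : norm2 (a *: x) = `|a| * norm2 x.
Proof. by rewrite /norm2 dotZl dotZr mulrA -expr2 sqrtrM ?sqr_ge0 // sqrtr_sqr. Qed.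

Lemma norm2_0 : norm2 (0 : 'rV[R]_n) = 0.
Proof. by rewrite /norm2 dot0l sqrtr0. Qed.

Lemma sqr_norm2D x y : norm2 (x + y) ^+ 2 = norm2 x ^+ 2 + 2 * dot x y + norm2 y ^+ 2.
Proof. rewrite !sqr_norm2 !dotDl !dotDr (dotC y x); lra. Qed.

Lemma cauchy_schwarz x y : `|dot x y| <= norm2 x * norm2 y.
Proof.
have quad t : 0 <= dot x x - 2 * t * dot x y + t ^+ 2 * dot y y.
  have := dotxx_ge0 (x - t *: y).
  rewrite !dotBl !dotBr !dotZl !dotZr (dotC y x); lra.
rewrite -ler_sqr ?nnegrE ?mulr_ge0 ?norm2_ge0 // exprMn !sqr_norm2 real_normK ?num_real //.
have [yy0|yy_neq0] := eqVneq (dot y y) 0.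
  suff -> : dot x y = 0 by rewrite yy0 expr0n mulr0.
  (* otherwise the quadratic in t is affine with nonzero slope *)
  apply: contra_eq yy0 => xy_neq0.
  have := quad ((dot x x + 1) / (2 * dot x y)).
  have -> : 2 * ((dot x x + 1) / (2 * dot x y)) * dot x y = dot x x + 1 by field.
  by apply: contraTneq => ->; rewrite mulr0 addr0; lra.
have yy_gt0 : 0 < dot y y by rewrite lt0r yy_neq0 dotxx_ge0.
have := quad (dot x y / dot y y).
have -> : dot x x - 2 * (dot x y / dot y y) * dot x y + (dot x y / dot y y) ^+ 2 * dot y y
          = dot x x - dot x y ^+ 2 / dot y y by field.
by rewrite subr_ge0 ler_pdivrMr.
Qed.

Lemma ler_norm2D x y : norm2 (x + y) <= norm2 x + norm2 y.
Proof.
rewrite -ler_sqr ?nnegrE ?addr_ge0 ?norm2_ge0 // sqr_norm2D.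
have := cauchy_schwarz x y; have := ler_norm (dot x y).
have := norm2_ge0 x; have := norm2_ge0 y; nra.
Qed.

Lemma ler_coord_norm2 x i : `|x 0 i| <= norm2 x.
Proof.
rewrite -ler_sqr ?nnegrE ?norm2_ge0 // sqr_norm2 real_normK ?num_real //.
rewrite /dot (bigD1 i) //= -expr2 lerDl.
by apply: sumr_ge0 => j _; rewrite -expr2 sqr_ge0.
Qed.

Lemma norm2_eq0 x : norm2 x = 0 -> x = 0.
Proof.
move=> x0; apply/rowP => i; rewrite mxE.
apply/eqP; rewrite -normr_eq0 eq_le normr_ge0 andbT -x0; exact: ler_coord_norm2.
Qed.

End Euclidean.

Section Topology.
Variables (R : realType) (n : nat).
Implicit Types (x : 'rV[R]_n).

Lemma ler_mx_norm2 x : `|x| <= norm2 x.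
Proof.
change (mx_norm x <= norm2 x); rewrite mx_normrE; apply: bigmax_le; first exact: norm2_ge0.
by move=> [i j] _ /=; rewrite (ord1 i); exact: ler_coord_norm2.
Qed.

Lemma ler_norm2_mx x : norm2 x <= n.+1%:R * `|x|.
Proof.
have coord_le i : `|x 0 i| <= `|x|.
  by change (`|x 0 i| <= mx_norm x); rewrite mx_normrE; exact: (le_bigmax _ _ (0, i)).
have sqr_le : norm2 x ^+ 2 <= n%:R * `|x| ^+ 2.
  rewrite sqr_norm2 /dot -[n in n%:R]card_ord -sum1_card natr_sum mulr_suml.
  apply: ler_sum => i _; rewrite mul1r -expr2 -real_normK ?num_real //.
  by rewrite lerXn2r ?nnegrE.
rewrite -ler_sqr ?nnegrE ?norm2_ge0 ?mulr_ge0 //; apply: (le_trans sqr_le).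
rewrite exprMn -natrX ler_wpM2r ?sqr_ge0 // ler_nat.
by rewrite (leq_trans (leqnSn n)) // -{1}(expn1 n.+1) leq_pexp2l.
Qed.

Lemma nbhs_norm2 x (P : 'rV[R]_n -> Prop) (d : R) : 0 < d ->
  (forall z, norm2 (z - x) < d -> P z) -> \forall z \near x, P z.
Proof.
move=> d_gt0 dP; apply/nbhs_normP; exists (d / n.+1%:R); first by rewrite /= divr_gt0.
move=> z /= xz; apply: dP; apply: le_lt_trans (ler_norm2_mx _) _.
by rewrite -opprB normrN mulrC -ltr_pdivlMr.
Qed.

Lemma lsc_closed_sublevel (F : 'rV[R]_n -> \bar R) (a : R) :
  lsc F -> closed [set x | (F x <= a%:E)%E].
Proof.
move=> Flsc; rewrite -openC openE => x /= /negP; rewrite -ltNge => /Flsc[d [d_gt0 dF]].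
by apply: nbhs_norm2 d_gt0 _ => z /dF; rewrite /= ltNge => /negP.
Qed.

Lemma continuous_bounded_above (S : set 'rV[R]_n) (u : 'rV[R]_n -> R) (M : R) :
  closed S -> (forall x, S x -> norm2 x <= M) -> (forall x, S x -> continuous_at x u) ->
  exists B, forall x, S x -> u x <= B.
Proof.
move=> Sclosed SM uc.
have Sbounded : bounded_set S.
  exists M; split; first exact: num_real.
  by move=> N MN x Sx; apply: le_trans (ler_mx_norm2 x) (le_trans (SM _ Sx) (ltW MN)).
have Scompact := bounded_closed_compact Sbounded Sclosed.
have uS : {within S, continuous u}.
  by apply: continuous_in_subspaceT => x; rewrite inE => /uc.
have [B [_ uB]] := compact_bounded (continuous_compact uS Scompact).
exists (`|B| + 1) => x Sx.
apply: le_trans (ler_norm _) _; apply: uB; last by exists x.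
by rewrite (le_lt_trans (real_ler_norm _)) ?num_real ?ltrDl.
Qed.

End Topology.

Section Differentiable.
Variables (R : realType) (n : nat).
Implicit Types (x y z d : 'rV[R]_n).

Lemma gradient_lipschitz_at (u : 'rV[R]_n -> R) x gv : is_gradient u x gv ->
  exists r K, 0 < r /\ forall z, norm2 (z - x) < r -> `|u z - u x| <= K * norm2 (z - x).
Proof.
move=> /(_ 1 ltr01)[r [r_gt0 ur]]; exists r, (norm2 gv + 1); split => // z /ur.
rewrite mul1r => uz.
have := cauchy_schwarz gv (z - x); have := ler_norm (dot gv (z - x)).
have : `|u z - u x| <= `|u z - u x - dot gv (z - x)| + `|dot gv (z - x)|.
  by rewrite -[X in `|X| <= _](subrK (dot gv (z - x))) ler_normD.
have := norm2_ge0 (z - x); lra.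
Qed.

Lemma gradient_continuous (u : 'rV[R]_n -> R) x gv : is_gradient u x gv -> continuous_at x u.
Proof.
move=> /gradient_lipschitz_at[r [K [r_gt0 uK]]].
apply/(@cvgrPdist_lt _ _ _ _ (nbhs_filter x)) => e e_gt0.
have m_gt0 : 0 < Num.min r (e / (`|K| + 1)) by rewrite lt_min r_gt0 divr_gt0 ?ltr_pwDr.
apply: nbhs_norm2 m_gt0 _ => z; rewrite lt_min => /andP[zr ze].
rewrite distrC; apply: le_lt_trans (uK _ zr) _.
rewrite ltr_pdivlMr ?ltr_pwDr // in ze.
have := norm2_ge0 (z - x); have := ler_norm K; nra.
Qed.

Lemma gradient_half_lower_bound (u : 'rV[R]_n -> R) x gv : is_gradient u x gv -> 0 < u x ->
  exists r, 0 < r /\ forall z, norm2 (z - x) < r -> u x / 2 <= u z.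
Proof.
move=> /gradient_lipschitz_at[r [K [r_gt0 uK]]] ux_gt0.
have s_gt0 : 0 < u x / (2 * (`|K| + 1)) by rewrite divr_gt0 ?mulr_gt0 ?ltr_pwDr.
exists (Num.min r (u x / (2 * (`|K| + 1)))); split; first by rewrite lt_min r_gt0.
move=> z; rewrite lt_min => /andP[zr zs].
have := uK _ zr; rewrite ler_norml => /andP[+ _].
rewrite ltr_pdivlMr ?mulr_gt0 ?ltr_pwDr // in zs.
have := norm2_ge0 (z - x); have := ler_norm K; nra.
Qed.

Lemma is_derive_along (u : 'rV[R]_n -> R) (gu : 'rV[R]_n -> 'rV[R]_n) x d (t : R) :
  is_gradient u (x + t *: d) (gu (x + t *: d)) ->
  is_derive t 1 (fun s : R => u (x + s *: d)) (dot (gu (x + t *: d)) d).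
Proof.
set p := x + t *: d; set D := dot (gu p) d => ugrad.
have quotient_cvg :
    (fun s : R => s^-1 *: (u (x + (s *: 1 + t) *: d) - u p)) @ 0^' --> D.
  apply/cvgrPdist_lt => e e_gt0.
  have c_gt0 : 0 < norm2 d + 1 by rewrite ltr_pwDr ?norm2_ge0.
  have [r [r_gt0 ur]] := ugrad _ (divr_gt0 e_gt0 c_gt0).
  apply/nbhs_normP; exists (r / (norm2 d + 1)); first by rewrite /= divr_gt0.
  move=> s /=; rewrite distrC subr0 ltr_pdivlMr // => sr s_neq0.
  have -> : x + (s *: 1 + t) *: d = p + s *: d.
    have -> : s *: 1 = s :> R by rewrite /GRing.scale /= mulr1.
    by rewrite scalerDl addrA addrAC.
  have := ur (p + s *: d); rewrite addrAC subrr add0r norm2Z dotZr.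
  have d_ge0 := norm2_ge0 d; have s_gt0 : 0 < `|s| by rewrite normr_gt0.
  move=> /(_ _)/wrap[]; first by nra.
  have -> : D - s^-1 *: (u (p + s *: d) - u p) = - (s^-1 * (u (p + s *: d) - u p - s * D)).
    by rewrite /GRing.scale /=; field.
  rewrite normrN normrM normrV ?unitfE // -/D => uD.
  rewrite -ltr_pdivlMl ?invr_gt0 // invrK; apply: le_lt_trans uD _.
  rewrite mulrCA ltr_pM2l // mulrAC ltr_pdivrMr // ltr_pM2l //.
  by rewrite ltrDl.
have uderivable : derivable (fun s : R => u (x + s *: d)) t 1 by apply/cvgP: quotient_cvg.
by apply: DeriveDef => //; exact: cvg_lim.
Qed.

Lemma descent_lemma (u : 'rV[R]_n -> R) (gu : 'rV[R]_n -> 'rV[R]_n) (L : R) x y :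
  (forall z, is_gradient u z (gu z)) -> lipschitz_vec L gu -> 0 <= L ->
  u y <= u x + dot (gu x) (y - x) + L / 2 * norm2 (y - x) ^+ 2.
Proof.
move=> ugrad glip L_ge0.
set d := y - x; set B := dot (gu x) d; set c := L / 2 * norm2 d ^+ 2.
pose psi : R -> R := (fun s => u (x + s *: d)) - (@id R * cst B) - (c \*: (@id R * @id R)).
pose dpsi t := dot (gu (x + t *: d)) d - B - c * (t + t).
have psi_derive (t : R) : is_derive t 1 psi (dpsi t).
  have psi_derive := is_deriveB (is_deriveB (is_derive_along (ugrad (x + t *: d)))
    (is_deriveM (is_derive_id t (1 : R)) (is_derive_cst B t 1)))
    (is_deriveZ c (is_deriveM (is_derive_id t (1 : R)) (is_derive_id t (1 : R)))).
  apply: is_derive_eq psi_derive _.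
  by rewrite /dpsi /= /GRing.scale /= mulr0 add0r !mulr1.
have [s s01 psi_mvt] : exists2 s : R, s \in `]0, 1[%R & psi 1 - psi 0 = dpsi s * (1 - 0).
  apply: (@MVT R psi dpsi 0 1 ltr01); apply: derivable_within_continuous => t _.
  by case: (psi_derive t).
have s_gt0 : 0 < s by move: s01; rewrite in_itv /= => /andP[].
have dpsi_le0 : dpsi s <= 0.
  have := cauchy_schwarz (gu (x + s *: d) - gu x) d.
  have := glip (x + s *: d) x; rewrite addrAC subrr add0r norm2Z (gtr0_norm s_gt0).
  rewrite /dpsi dotBl -/B.
  have := norm2_ge0 d; have := norm2_ge0 (gu (x + s *: d) - gu x).
  set w := dot _ d; set a := norm2 (_ - _) => a_ge0 d_ge0 aL wa.
  have : a * norm2 d <= L * (s * norm2 d) * norm2 d by apply: ler_wpM2r.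
  have := ler_norm (w - B); rewrite /c; nra.
have : psi 1 - psi 0 = u y - u x - B - c.
  change (u (x + 1 *: d) - 1 * B - c * (1 * 1) - (u (x + 0 *: d) - 0 * B - c * (0 * 0))
    = u y - u x - B - c).
  rewrite scale1r scale0r addr0 /d (addrC x) subrK; ring.
by move: psi_mvt dpsi_le0; rewrite subr0 mulr1; lra.
Qed.

End Differentiable.

Section Norm2Convergence.
Variables (R : realType) (n : nat).
Implicit Types (y z : nat -> 'rV[R]_n) (l : 'rV[R]_n).

Definition norm2_cvg y l :=
  forall e : R, 0 < e -> exists N, forall j, (N <= j)%N -> norm2 (y j - l) < e.

Lemma cvg_dominated (u r : nat -> R) (l : R) :
  (forall j, `|u j - l| <= r j) -> r @ \oo --> 0 -> u @ \oo --> l.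
Proof.
move=> ur /cvgrPdist_lt r0; apply/cvgrPdist_lt => e /r0.
apply: filterS => j; rewrite sub0r normrN distrC.
by apply: le_lt_trans; apply: le_trans (ur j) (ler_norm _).
Qed.

Lemma norm2_cvg_dist y l : norm2_cvg y l -> (fun j => norm2 (y j - l)) @ \oo --> 0.
Proof.
move=> yl; apply/cvgrPdist_lt => e /yl[N yN]; exists N => // j /yN.
by rewrite sub0r normrN ger0_norm ?norm2_ge0.
Qed.

Lemma norm2_cvg_near y z l :
  norm2_cvg y l -> norm2_cvg (fun j => z j - y j) 0 -> norm2_cvg z l.
Proof.
move=> yl zy e e_gt0; have e2_gt0 : 0 < e / 2 by rewrite divr_gt0.
have [[N1 yN1] [N2 zyN2]] := (yl _ e2_gt0, zy _ e2_gt0).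
exists (maxn N1 N2) => j; rewrite geq_max => /andP[/yN1 yj /zyN2].
rewrite subr0 => zyj; have := ler_norm2D (z j - y j) (y j - l).
by rewrite addrA subrK; lra.
Qed.

Lemma norm2_cvg_loc_lipschitz (u : 'rV[R]_n -> R) (Q : set 'rV[R]_n) y l :
  norm2_cvg y l -> (forall j, Q (y j)) ->
  (exists r K, 0 < r /\
     forall v, Q v -> norm2 (v - l) < r -> `|u v - u l| <= K * norm2 (v - l)) ->
  (fun j => u (y j)) @ \oo --> u l.
Proof.
move=> yl Qy [r [K [r_gt0 uK]]]; apply/cvgrPdistC_lt => e e_gt0.
have c_gt0 : 0 < `|K| + 1 by rewrite ltr_pwDr.
have m_gt0 : 0 < Num.min r (e / (`|K| + 1)) by rewrite lt_min r_gt0 divr_gt0.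
have [N yN] := yl _ m_gt0; exists N => // j /yN; rewrite lt_min => /andP[yr ye].
apply: le_lt_trans (uK _ (Qy j) yr) _.
rewrite ltr_pdivlMr // in ye.
have := norm2_ge0 (y j - l); have := ler_norm K; nra.
Qed.

Lemma norm2_cvg_dot y z l m :
  norm2_cvg y l -> norm2_cvg z m -> (fun j => dot (y j) (z j)) @ \oo --> dot l m.
Proof.
move=> yl zm; apply: (@cvg_dominated _
  (fun j => norm2 (y j - l) * (norm2 m + norm2 (z j - m)) + norm2 l * norm2 (z j - m))).
  move=> j; have -> : dot (y j) (z j) - dot l m = dot (y j - l) (z j) + dot l (z j - m).
    by rewrite dotBl dotBr; ring.
  apply: le_trans (ler_normD _ _) _; apply: lerD; last exact: cauchy_schwarz.
  apply: le_trans (cauchy_schwarz _ _) _; rewrite ler_wpM2l ?norm2_ge0 //.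
  by rewrite -{1}(subrK m (z j)) addrC ler_norm2D.
have -> : 0 = 0 * (norm2 m + 0) + norm2 l * 0 :> R by ring.
have [yl0 zm0] := (norm2_cvg_dist yl, norm2_cvg_dist zm).
by apply: cvgD; [apply: cvgM => //; apply: cvgD => //; exact: cvg_cst | exact: cvgMl_tmp].
Qed.

Lemma norm2_cvg_distr y l w :
  norm2_cvg y l -> (fun j => norm2 (w - y j)) @ \oo --> norm2 (w - l).
Proof.
move=> /norm2_cvg_dist; apply: cvg_dominated => j.
have t1 := ler_norm2D (w - y j) (y j - l); rewrite addrA subrK in t1.
have t2 := ler_norm2D (w - l) (l - y j); rewrite addrA subrK norm2_subC in t2.
by rewrite ler_norml; apply/andP; split; lra.
Qed.

Lemma norm2_cvg_subseq y l (phi : nat -> nat) :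
  (forall j, (phi j < phi j.+1)%N) -> norm2_cvg y l -> norm2_cvg (fun j => y (phi j)) l.
Proof.
move=> phi_incr yl e /yl[N yN]; exists N => j Nj; apply: yN.
suff : (j <= phi j)%N by apply: leq_trans.
by elim: j {Nj} => // j IH; exact: leq_ltn_trans IH (phi_incr j).
Qed.

Lemma norm2_cvg_lipschitz (u : 'rV[R]_n -> 'rV[R]_n) (L : R) y l :
  0 < L -> lipschitz_vec L u -> norm2_cvg y l -> norm2_cvg (fun j => u (y j)) (u l).
Proof.
move=> L_gt0 uL yl e e_gt0; have [N yN] := yl _ (divr_gt0 e_gt0 L_gt0).
by exists N => j /yN; rewrite ltr_pdivlMr // mulrC; exact: le_lt_trans (uL _ _).
Qed.

Lemma gradient_cvg (u : 'rV[R]_n -> R) y l gv :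
  is_gradient u l gv -> norm2_cvg y l -> (fun j => u (y j)) @ \oo --> u l.
Proof.
move=> /gradient_lipschitz_at[r [K [r_gt0 uK]]] yl.
apply: (norm2_cvg_loc_lipschitz (Q := setT) yl) => //.
by exists r, K; split=> // v _; exact: uK.
Qed.

End Norm2Convergence.

Definition feasible (R : realType) (n : nat) (f : 'rV[R]_n -> \bar R) (g : 'rV[R]_n -> R) x :=
  dom f x /\ Omega g x.

Section FractionalProgram.
Variables (R : realType) (n : nat) (f : 'rV[R]_n -> \bar R) (g h : 'rV[R]_n -> R).
Hypothesis f_proper : proper_fun f.
Implicit Types (x w : 'rV[R]_n).

Local Notation F := (Ffrac f g h).

Lemma dom_fin x : dom f x -> f x = (fine (f x))%:E.
Proof. by case: f_proper => /(_ x) + _; rewrite /dom /=; case: (f x). Qed.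

Lemma Ffrac_feasible x : feasible f g x -> F x = ((fine (f x) + h x) / g x)%:E.
Proof. by case=> /= fx gx; rewrite /Ffrac gx fx. Qed.

Lemma Ffrac_infeasible x : ~ feasible f g x -> F x = +oo%E.
Proof. by move=> xNfeas; rewrite /Ffrac; case: ifP => // /andP[? ?]; case: xNfeas. Qed.

Lemma feasible_sublevel x (a : R) : (F x <= a%:E)%E -> feasible f g x.
Proof. by move=> Fxa; apply: contrapT => /Ffrac_infeasible Fx; move: Fxa; rewrite Fx. Qed.

Lemma in_prox_dom (a c : R) (x0 u : 'rV[R]_n) : 0 < a ->
  in_prox (fun v => (a%:E * (f v - (c * g v)%:E))%E) x0 u ->
  dom f u /\ forall w, dom f w ->
    a * (fine (f u) - c * g u) + norm2 (u - x0) ^+ 2 / 2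
      <= a * (fine (f w) - c * g w) + norm2 (w - x0) ^+ 2 / 2.
Proof.
move=> a_gt0 uprox; have [fNy [w0 w0dom]] := f_proper.
have prox_fin v q : (a%:E * (f v - (c * g v)%:E) + q%:E)%E
    = if f v is r%:E then (a * (r - c * g v) + q)%:E else +oo%E.
  by move: (fNy v); case: (f v) => //= _; rewrite mulry gtr0_sg // mul1e.
have udom : dom f u.
  by have := uprox w0; rewrite !prox_fin (dom_fin w0dom) /dom /=; case: (f u).
split=> // w wdom; have := uprox w.
by rewrite !prox_fin (dom_fin wdom) (dom_fin udom) lee_fin.
Qed.

Variables gradg gradh : 'rV[R]_n -> 'rV[R]_n.
Hypothesis f_loc_lipschitz : loc_lipschitz_on (feasible f g) (fun x => fine (f x)).
Hypothesis g_grad : forall x, dom f x -> Omega g x -> is_gradient g x (gradg x).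
Hypothesis g_pos : forall x, dom f x -> Omega g x -> 0 < g x.
Hypothesis h_grad : forall x, is_gradient h x (gradh x).

Lemma fine_f_cvg (z : nat -> 'rV[R]_n) xbar :
  norm2_cvg z xbar -> (forall j, feasible f g (z j)) -> feasible f g xbar ->
  (fun j => fine (f (z j))) @ \oo --> fine (f xbar).
Proof.
move=> zx zfeas xfeas.
apply: (norm2_cvg_loc_lipschitz (u := fun x => fine (f x)) (Q := feasible f g) zx zfeas).
have [r [K [r_gt0 fK]]] := f_loc_lipschitz xfeas.
by exists r, K; split=> // v vfeas vx; apply: fK; rewrite ?subrr ?norm2_0.
Qed.

Lemma Ffrac_cvg (z : nat -> 'rV[R]_n) xbar :
  norm2_cvg z xbar -> (forall j, feasible f g (z j)) -> feasible f g xbar ->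
  (fun j => fine (F (z j))) @ \oo --> fine (F xbar).
Proof.
move=> zx zfeas xfeas; have [xdom xOm] := xfeas.
have gx_neq0 : g xbar != 0 by rewrite gt_eqF ?g_pos.
rewrite (Ffrac_feasible xfeas) /=; under eq_fun do rewrite (Ffrac_feasible (zfeas _)) /=.
apply: cvgM; last exact: (cvgV gx_neq0 (gradient_cvg (g_grad xdom xOm) zx)).
by apply: cvgD; [exact: fine_f_cvg | exact: gradient_cvg].
Qed.

Hypothesis fh_ge0 : forall x, dom f x -> 0 <= fine (f x) + h x.

Lemma Ffrac_ge0 x : feasible f g x -> 0 <= fine (F x).
Proof.
by move=> [xdom xOm]; rewrite Ffrac_feasible //= divr_ge0 ?fh_ge0 // ltW ?g_pos.
Qed.

Lemma stationary_of_quadratic_model (a : R) xbar : 0 < a -> feasible f g xbar ->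
  (forall w, dom f w -> - h xbar <= fine (f w) - fine (F xbar) * g w
                        + norm2 (w - xbar) ^+ 2 / (2 * a) + dot (gradh xbar) (w - xbar)) ->
  stationary F xbar.
Proof.
move=> a_gt0 [xdom xOm] model; have gx_gt0 := g_pos xdom xOm.
set C := fine (F xbar).
have FxC : F xbar = C%:E by rewrite /C (Ffrac_feasible (conj xdom xOm)).
split=> [|eps eps_gt0]; first by rewrite FxC.
have [r1 [r1_gt0 g_half]] := gradient_half_lower_bound (g_grad xdom xOm) gx_gt0.
set e := eps * g xbar / 4.
have [r2 [r2_gt0 h_approx]] := h_grad xbar (divr_gt0 (mulr_gt0 eps_gt0 gx_gt0) (ltr0Sn _ 3)).
set r3 := eps * g xbar * a / 2.
have r3_gt0 : 0 < r3 by rewrite divr_gt0 // !mulr_gt0.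
exists (Num.min r1 (Num.min r2 r3)); split; first by rewrite !lt_min r1_gt0 r2_gt0.
move=> z _; rewrite !lt_min => /and3P[zr1 zr2 zr3].
have [zfeas|/Ffrac_infeasible ->] := pselect (feasible f g z); last by rewrite leey.
rewrite FxC (Ffrac_feasible zfeas) dot0l sub0r -EFinD lee_fin.
set r := norm2 (z - xbar); have r_ge0 : 0 <= r := norm2_ge0 _.
have gz_ge := g_half z zr1; have gz_gt0 : 0 < g z by apply: g_pos; case: zfeas.
(* near xbar the quadratic term is dominated by the first-order error budget *)
have quad_le : r ^+ 2 / (2 * a) <= e * r.
  rewrite ler_pdivrMr ?mulr_gt0 // expr2.
  have -> : e * r * (2 * a) = r * r3 by rewrite /e /r3; field.
  by rewrite ler_wpM2l // ltW.
have err_le : e * r * 2 <= eps * r * g z.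
  have -> : e * r * 2 = eps * r * (g xbar / 2) by rewrite /e; field.
  by rewrite ler_wpM2l ?mulr_ge0 // ltW.
have := model z zfeas.1; have := h_approx z zr2; rewrite -/r -/e -/C ler_norml => /andP[+ _].
rewrite ler_pdivlMr // mulrBl; lra.
Qed.

Section PPGA.
Variables (L : R) (alpha : nat -> R) (alow aup : R) (xs : nat -> 'rV[R]_n).
Hypothesis L_gt0 : 0 < L.
Hypothesis gradh_lipschitz : lipschitz_vec L gradh.
Hypothesis F_lsc : lsc F.
Hypothesis F_level_bounded : level_bounded F.
Hypothesis alow_gt0 : 0 < alow.
Hypothesis aup_lt : aup < 1 / L.
Hypothesis alpha_range : forall k, alow <= alpha k <= aup.
Hypothesis x0_feasible : feasible f g (xs 0%N).
Hypothesis ppga_step : forall k,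
  in_prox (fun u => ((alpha k)%:E * (f u - ((fine (F (xs k))) * g u)%:E))%E)
          (xs k - alpha k *: gradh (xs k)) (xs k.+1).

Local Notation C k := (fine (F (xs k))).

Lemma alpha_gt0 k : 0 < alpha k.
Proof. by case/andP: (alpha_range k) => /(lt_le_trans alow_gt0). Qed.

Definition decrease_coef := 1 / (2 * aup) - L / 2.

Lemma decrease_coef_gt0 : 0 < decrease_coef.
Proof.
have aup_gt0 : 0 < aup by case/andP: (alpha_range 0) => _; exact: lt_le_trans (alpha_gt0 0).
have -> : decrease_coef = (1 - aup * L) / (2 * aup).
  by rewrite /decrease_coef; field; rewrite gt_eqF.
by rewrite divr_gt0 ?mulr_gt0 // subr_gt0 -ltr_pdivlMr.
Qed.

Lemma merit_decrease k : feasible f g (xs k) ->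
  fine (f (xs k.+1)) + h (xs k.+1) - C k * g (xs k.+1)
    <= - decrease_coef * norm2 (xs k.+1 - xs k) ^+ 2.
Proof.
move=> [xdom xOm]; have a_gt0 := alpha_gt0 k.
have a_le : alpha k <= aup by case/andP: (alpha_range k).
have [_ prox] := in_prox_dom a_gt0 (ppga_step k).
have := prox _ xdom; have := descent_lemma (xs k) (xs k.+1) h_grad gradh_lipschitz (ltW L_gt0).
have Cx : fine (f (xs k)) - C k * g (xs k) = - h (xs k).
  by rewrite (Ffrac_feasible (conj xdom xOm)) /=; field; rewrite gt_eqF ?g_pos.
have coef_le : (alpha k * L - 1) / 2 <= alpha k * - decrease_coef.
  have aup_gt0 : 0 < aup by exact: lt_le_trans a_le.
  have : alpha k / aup <= 1 by rewrite ler_pdivrMr // mul1r.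
  have -> : alpha k * - decrease_coef = alpha k * L / 2 - alpha k / aup / 2.
    by rewrite /decrease_coef; field; rewrite gt_eqF.
  lra.
rewrite -/(C k) Cx.
set x := xs k; set x1 := xs k.+1; set a := alpha k; set v := gradh x.
have -> : x1 - (x - a *: v) = (x1 - x) + a *: v by rewrite opprB addrA addrAC.
have -> : x - (x - a *: v) = a *: v by rewrite opprB addrC subrK.
rewrite (sqr_norm2D (x1 - x)) dotZr (dotC _ v); set D := norm2 (x1 - x) => desc step.
have D2_ge0 : 0 <= D ^+ 2 := sqr_ge0 _.
rewrite -(ler_pM2l a_gt0) mulrA; apply: le_trans (ler_wpM2r D2_ge0 coef_le).
have := ler_wpM2l (ltW a_gt0) desc; rewrite -/a; lra.
Qed.

Lemma iterate_feasible k : feasible f g (xs k).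
Proof.
elim: k => // k kfeas; have [x1dom _] := in_prox_dom (alpha_gt0 k) (ppga_step k).
split=> //; apply/negP => /eqP g1_eq0.
(* a zero denominator at [x1] forces [x1 = xk] through the merit decrease *)
have := merit_decrease kfeas; rewrite g1_eq0 mulr0 subr0 => merit.
have sqD_le0 : norm2 (xs k.+1 - xs k) ^+ 2 <= 0.
  rewrite -(pmulr_rle0 _ decrease_coef_gt0); have := fh_ge0 x1dom; lra.
have /norm2_eq0/eqP : norm2 (xs k.+1 - xs k) = 0.
  by apply/eqP; rewrite -sqrf_eq0 eq_le sqD_le0 sqr_ge0.
by rewrite subr_eq0 => /eqP x1x; case: kfeas => _; rewrite /Omega /= -x1x g1_eq0 eqxx.
Qed.

Lemma sufficient_decrease k :
  decrease_coef * norm2 (xs k.+1 - xs k) ^+ 2 <= g (xs k.+1) * (C k - C k.+1).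
Proof.
have [x1dom x1Om] := iterate_feasible k.+1; have g1_gt0 := g_pos x1dom x1Om.
have := merit_decrease (iterate_feasible k).
rewrite (Ffrac_feasible (conj x1dom x1Om)) /=.
have -> : g (xs k.+1) * (C k - (fine (f (xs k.+1)) + h (xs k.+1)) / g (xs k.+1))
    = C k * g (xs k.+1) - (fine (f (xs k.+1)) + h (xs k.+1)).
  by field; rewrite gt_eqF.
lra.
Qed.

Lemma C_nonincreasing : nonincreasing_seq (fun k => C k).
Proof.
apply/nonincreasing_seqP => k; have [x1dom x1Om] := iterate_feasible k.+1.
rewrite -subr_ge0 -(pmulr_rge0 _ (g_pos x1dom x1Om)).
apply: le_trans (sufficient_decrease k).
by rewrite mulr_ge0 ?sqr_ge0 // ltW ?decrease_coef_gt0.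
Qed.

Lemma Ffrac_iterate k : F (xs k) = (C k)%:E.
Proof. by rewrite (Ffrac_feasible (iterate_feasible k)). Qed.

Lemma iterate_sublevel k : (F (xs k) <= (C 0%N)%:E)%E.
Proof. by rewrite Ffrac_iterate lee_fin; exact: C_nonincreasing. Qed.

Lemma iterates_bounded : bounded_seq xs.
Proof. by have [M FM] := F_level_bounded (C 0%N); exists M => k; apply: FM (iterate_sublevel k). Qed.

Lemma g_iterates_bounded : exists G, 0 < G /\ forall k, g (xs k) <= G.
Proof.
have [M FM] := F_level_bounded (C 0%N).
have g_cont x : (F x <= (C 0%N)%:E)%E -> continuous_at x g.
  by move=> /feasible_sublevel[xdom xOm]; exact: gradient_continuous (g_grad xdom xOm).
have [G gG] := continuous_bounded_above (lsc_closed_sublevel (a := C 0%N) F_lsc) FM g_cont.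
exists (Num.max G 1); split=> [|k]; first by rewrite lt_max ltr01 orbT.
by rewrite le_max gG //; exact: iterate_sublevel.
Qed.

Lemma step_length_vanishes : norm2_cvg (fun k => xs k.+1 - xs k) 0.
Proof.
have [G [G_gt0 gG]] := g_iterates_bounded; have c_gt0 := decrease_coef_gt0.
have C_cvg : cvgn (fun k => C k).
  apply: nonincreasing_is_cvgn C_nonincreasing _.
  by exists 0 => _ [k _ <-]; apply: Ffrac_ge0 (iterate_feasible k).
have dC : (fun k => C k - C k.+1) @ \oo --> 0.
  rewrite -(subrr (limn (fun k => C k))).
  by apply: cvgB => //; rewrite (cvg_shiftS (fun k => C k)).
move=> e e_gt0; have eps_gt0 : 0 < decrease_coef * e ^+ 2 / G.
  by rewrite divr_gt0 ?mulr_gt0 ?exprn_gt0.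
have [N _ dCN] := proj1 (cvgrPdist_lt _ _) dC _ eps_gt0.
exists N => k /dCN /=; rewrite sub0r normrN subr0 => dCk.
have Ck_ge : 0 <= C k - C k.+1 by rewrite subr_ge0 C_nonincreasing.
rewrite ger0_norm // ltr_pdivlMr // in dCk.
have gDC : g (xs k.+1) * (C k - C k.+1) <= G * (C k - C k.+1) by rewrite ler_wpM2r ?gG.
rewrite -(ltr_sqr (norm2_ge0 _) (ltW e_gt0)) -(ltr_pM2l c_gt0).
by have := sufficient_decrease k; lra.
Qed.

Lemma prox_model_ineq k w : dom f w ->
  fine (f (xs k.+1)) - C k * g (xs k.+1)
    <= fine (f w) - C k * g w + norm2 (w - xs k) ^+ 2 / (2 * alow)
       + dot (gradh (xs k)) (w - xs k.+1).
Proof.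
move=> wdom; have a_gt0 := alpha_gt0 k.
have a_ge : alow <= alpha k by case/andP: (alpha_range k).
have [_ prox] := in_prox_dom a_gt0 (ppga_step k); have := prox _ wdom.
set x := xs k; set x1 := xs k.+1; set a := alpha k; set v := gradh x.
have -> : x1 - (x - a *: v) = (x1 - x) + a *: v by rewrite opprB addrA addrAC.
have -> : w - (x - a *: v) = (w - x) + a *: v by rewrite opprB addrA addrAC.
rewrite (sqr_norm2D (x1 - x)) (sqr_norm2D (w - x)) !dotZr.
have -> : dot v (w - x1) = dot (w - x) v - dot (x1 - x) v.
  by rewrite (dotC v) -dotBl opprB addrA subrK.
(* the step size is at least [alow], which weakens the proximal term *)
have prox_term : norm2 (w - x) ^+ 2 / 2 <= a * (norm2 (w - x) ^+ 2 / (2 * alow)).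
  have -> : a * (norm2 (w - x) ^+ 2 / (2 * alow)) = a / alow * (norm2 (w - x) ^+ 2 / 2).
    by field; rewrite gt_eqF.
  by rewrite ler_peMl ?divr_ge0 ?sqr_ge0 // ler_pdivlMr // mul1r.
have := sqr_ge0 (norm2 (x1 - x)) => D2_ge0 step.
rewrite -(ler_pM2l a_gt0) -/a; lra.
Qed.

Lemma accumulation_feasible (phi : nat -> nat) xbar :
  norm2_cvg (fun j => xs (phi j)) xbar -> feasible f g xbar.
Proof.
move=> yx; apply: contrapT => /Ffrac_infeasible Fx.
have [|r [r_gt0 rF]] := @F_lsc xbar (C 0%N); first by rewrite Fx ltry.
have [N yN] := yx r r_gt0; have := rF _ (yN N (leqnn N)).
by rewrite ltNge iterate_sublevel.
Qed.

Lemma limit_quadratic_model (phi : nat -> nat) xbar :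
  (forall j, (phi j < phi j.+1)%N) -> norm2_cvg (fun j => xs (phi j)) xbar ->
  forall w, dom f w ->
    - h xbar <= fine (f w) - fine (F xbar) * g w
                + norm2 (w - xbar) ^+ 2 / (2 * alow) + dot (gradh xbar) (w - xbar).
Proof.
move=> phi_incr yx w wdom; have xfeas := accumulation_feasible yx.
have [xdom xOm] := xfeas; have gx_gt0 := g_pos xdom xOm.
have y1x : norm2_cvg (fun j => xs (phi j).+1) xbar.
  exact: norm2_cvg_near yx (norm2_cvg_subseq phi_incr step_length_vanishes).
have feas j : feasible f g (xs j) := iterate_feasible j.
have C_cvg := Ffrac_cvg yx (fun j => feas _) xfeas.
have lhs_cvg : (fun j => fine (f (xs (phi j).+1)) - C (phi j) * g (xs (phi j).+1))
    @ \oo --> fine (f xbar) - fine (F xbar) * g xbar.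
  apply: cvgB; first exact: fine_f_cvg y1x (fun j => feas _) xfeas.
  by apply: cvgM => //; exact: gradient_cvg (g_grad xdom xOm) y1x.
have dist_cvg : (fun j => norm2 (w - xs (phi j)) ^+ 2) @ \oo --> norm2 (w - xbar) ^+ 2.
  by rewrite expr2; under eq_fun do rewrite expr2; apply: cvgM; exact: norm2_cvg_distr.
have wy1 : norm2_cvg (fun j => w - xs (phi j).+1) (w - xbar).
  move=> e /y1x[N yN]; exists N => j /yN.
  have -> : w - xs (phi j).+1 - (w - xbar) = xbar - xs (phi j).+1.
    by rewrite opprB addrC addrA subrK.
  by rewrite norm2_subC.
have dot_cvg := norm2_cvg_dot (norm2_cvg_lipschitz L_gt0 gradh_lipschitz yx) wy1.
have rhs_cvg : (fun j => fine (f w) - C (phi j) * g w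
      + norm2 (w - xs (phi j)) ^+ 2 / (2 * alow) + dot (gradh (xs (phi j))) (w - xs (phi j).+1))
    @ \oo --> fine (f w) - fine (F xbar) * g w
      + norm2 (w - xbar) ^+ 2 / (2 * alow) + dot (gradh xbar) (w - xbar).
  apply: cvgD => //; apply: cvgD; last exact: cvgMr_tmp.
  by apply: cvgB; [exact: cvg_cst | exact: cvgMr_tmp].
have <- : fine (f xbar) - fine (F xbar) * g xbar = - h xbar.
  by rewrite (Ffrac_feasible xfeas) /=; field; rewrite gt_eqF.
apply: (ler_cvg_to lhs_cvg rhs_cvg); apply: nearW => j; exact: prox_model_ineq.
Qed.

Lemma accumulation_point_stationary xbar : accumulation_point xs xbar -> stationary F xbar.
Proof.
move=> [phi [phi_incr yx]].
apply: (stationary_of_quadratic_model alow_gt0 (accumulation_feasible yx)).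
exact: limit_quadratic_model yx.
Qed.
End PPGA.

End FractionalProgram.

Local Open Scope ereal_scope.

Theorem mainTheorem10 (R : realType) (n : nat)
  (f : 'rV[R]_n -> \bar R) (g h : 'rV[R]_n -> R)
  (gradg gradh : 'rV[R]_n -> 'rV[R]_n) (L : R)
  (Hfprop : proper_fun f) (Hflsc : lsc f)
  (Hi : loc_lipschitz_on (fun x => dom f x /\ Omega g x) (fun x => fine (f x)))
  (Hii_grad : forall x, dom f x -> Omega g x -> is_gradient g x (gradg x))
  (Hii_lip : loc_lipschitz_on_vec (fun x => dom f x /\ Omega g x) gradg)
  (Hii_pos : forall x, dom f x -> Omega g x -> (0 < g x)%R)
  (Hiii_grad : forall x, is_gradient h x (gradh x))
  (HL : (0 < L)%R) (Hiii_lip : lipschitz_vec L gradh)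
  (Hiv_nonneg : forall x, dom f x -> (0 <= fine (f x) + h x)%R)
  (Hiv_ne : exists x, dom f x /\ Omega g x)
  (Hv : forall (x : 'rV[R]_n) (gam : R), (0 <= gam)%R ->
          exists u, in_prox (fun w => f w - (gam * g w)%:E) x u)
  (Hvi_lsc : lsc (Ffrac f g h)) (Hvi_lb : level_bounded (Ffrac f g h))
  (alpha : nat -> R) (alow aup : R) (xs : nat -> 'rV[R]_n)
  (Halow : (0 < alow)%R) (Hale : (alow <= aup)%R) (Haup : (aup < 1 / L)%R)
  (Halpha : forall k, (alow <= alpha k <= aup)%R)
  (Hx0 : dom f (xs 0%N) /\ Omega g (xs 0%N))
  (Hstep : forall k : nat,
     in_prox (fun u => (alpha k)%:E * (f u - ((fine (Ffrac f g h (xs k))) * g u)%:E))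
             (xs k - alpha k *: gradh (xs k)) (xs k.+1)) :
  bounded_seq xs /\
  (forall xbar, accumulation_point xs xbar -> stationary (Ffrac f g h) xbar).
Proof.
split; first exact: (iterates_bounded Hfprop Hii_pos Hiii_grad Hiv_nonneg HL Hiii_lip
                       Hvi_lb Halow Haup Halpha Hx0 Hstep).
move=> xbar; exact: (accumulation_point_stationary Hfprop Hi Hii_grad Hii_pos Hiii_grad
                       Hiv_nonneg HL Hiii_lip Hvi_lsc Hvi_lb Halow Haup Halpha Hx0 Hstep).
Qed.
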